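(* With $h$ as defined in the context, for every $x\in(-2,\infty)$, \[1<h(x)<\left(\frac{x+3}{x+2}\right)^2.\]
   Context: Let $u_n=(-1)^{s_2(n)}$, where $s_2(n)$ is the sum of the binary digits of the non-negative integer $n$ (Thue–Morse sequence with values $\pm1$). For real $x>-2$ define $h(x)=\prod_{n=1}^\infty\left(\frac{2n+x}{2n+1+x}\right)^{u_n}$ (limit of partial products; it converges). *)

From Stdlib Require Import Reals ZArith Arith.
From Coquelicot Require Import Coquelicot.
Open Scope R_scope.

(* s2 n : sum of the binary digits of n.  All bits of n at positions > n vanish
   (n < 2^(n+1)), so counting set bits among positions 0..n is exact. *)
Fixpoint bitcount_upto (n k : nat) : nat :=
  match k with
  | O => if Nat.testbit n 0 then 1%nat else 0%nat
  | S j => ((if Nat.testbit n k then 1%nat else 0%nat) + bitcount_upto n j)%nat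
  end.

Definition s2 (n : nat) : nat := bitcount_upto n n.

Definition u (n : nat) : Z := ((-1) ^ Z.of_nat (s2 n))%Z.

Definition hfactor (x : R) (n : nat) : R :=
  powerRZ ((2 * INR n + x) / (2 * INR n + 1 + x)) (u n).

Fixpoint hpartial (x : R) (N : nat) : R :=
  match N with
  | O => 1
  | S m => hpartial x m * hfactor x (S m)
  end.

Definition h (x : R) : R := real (Lim_seq (hpartial x)).

From Stdlib Require Import Reals ZArith Arith Lia Lra.
From Coquelicot Require Import Coquelicot.
Open Scope R_scope.

(* Taking logarithms, log h(x) = sum_{n >= 1} u_n l(2n + x) with l(p) = ln (p / (p + 1)), and
   -1/p <= l(p) <= -1/(p + 1).  Since u_{4m+r} = u_m, -u_m, -u_m, u_m for r = 0, 1, 2, 3, the terms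
   with n >= 4 group into blocks u_m (l(y) - l(y + 2) - l(y + 4) + l(y + 6)) with y = 8m + x, and
   such a block is at most 2/y^2 - 2/(y + 8)^2 in absolute value.  These bounds telescope, so the
   block series converges absolutely to a sum of modulus at most 2/(x + 8)^2, while the first three
   terms -l(x + 2) - l(x + 4) + l(x + 6) lie strictly between 2/(x + 8)^2 and
   2 ln ((x + 3) / (x + 2)) - 2/(x + 8)^2. *)

Lemma bitcount_upto_shift (n : nat) (b : bool) (k : nat) :
  bitcount_upto (2 * n + Nat.b2n b) (S k) = (Nat.b2n b + bitcount_upto n k)%nat.
Proof.
  induction k as [|k IH].
  - cbn [bitcount_upto]. rewrite Nat.testbit_succ_r, Nat.testbit_0_r.
    destruct b, (Nat.testbit n 0); reflexivity.
  - change (bitcount_upto (2 * n + Nat.b2n b) (S (S k))) with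
      ((if Nat.testbit (2 * n + Nat.b2n b) (S (S k)) then 1 else 0)
       + bitcount_upto (2 * n + Nat.b2n b) (S k))%nat.
    rewrite IH, Nat.testbit_succ_r. cbn [bitcount_upto]. lia.
Qed.

Lemma bitcount_upto_stable (m k j : nat) :
  (m < 2 ^ S k)%nat -> bitcount_upto m (j + k) = bitcount_upto m k.
Proof.
  intros Hm. induction j as [|j IH]; [reflexivity|].
  cbn [bitcount_upto Nat.add]. rewrite IH.
  assert (Hhigh : Nat.testbit m (S (j + k)) = false).
  { rewrite Nat.testbit_eqb, Nat.div_small; [reflexivity|].
    apply (Nat.lt_le_trans _ _ _ Hm), Nat.pow_le_mono_r; lia. }
  rewrite Hhigh. reflexivity.
Qed.

Lemma s2_shift (n : nat) (b : bool) : s2 (2 * n + Nat.b2n b) = (Nat.b2n b + s2 n)%nat.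
Proof.
  destruct n as [|n]; [destruct b; reflexivity|].
  unfold s2. rewrite <- bitcount_upto_shift.
  replace (2 * S n + Nat.b2n b)%nat with ((n + Nat.b2n b) + S (S n))%nat at 2 by lia.
  apply bitcount_upto_stable.
  pose proof (Nat.pow_gt_lin_r 2 (S n) ltac:(lia)). destruct b; simpl in *; lia.
Qed.

Lemma u_double (n : nat) : u (2 * n) = u n.
Proof.
  pose proof (s2_shift n false) as Hs. rewrite Nat.add_0_r in Hs.
  unfold u. rewrite Hs. reflexivity.
Qed.

Lemma u_double_add1 (n : nat) : u (2 * n + 1) = (- u n)%Z.
Proof.
  unfold u. change (2 * n + 1)%nat with (2 * n + Nat.b2n true)%nat.
  rewrite s2_shift, Nat2Z.inj_add, Z.pow_add_r by lia.
  change (Z.of_nat (Nat.b2n true)) with 1%Z. ring.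
Qed.

Lemma u_sign (n : nat) : u n = 1%Z \/ u n = (-1)%Z.
Proof.
  unfold u. induction (s2 n) as [|k IH]; [left; reflexivity|].
  rewrite Nat2Z.inj_succ, Z.pow_succ_r by lia.
  destruct IH as [-> | ->]; [right | left]; reflexivity.
Qed.

Definition tm (n : nat) : R := IZR (u n).

Lemma Rabs_tm_mul (n : nat) (r : R) : Rabs (tm n * r) = Rabs r.
Proof.
  unfold tm. rewrite Rabs_mult. destruct (u_sign n) as [-> | ->].
  - rewrite Rabs_R1. ring.
  - rewrite Rabs_m1. ring.
Qed.

Lemma tm_block (m : nat) :
  tm (4 * m) = tm m /\ tm (4 * m + 1) = - tm m /\
  tm (4 * m + 2) = - tm m /\ tm (4 * m + 3) = tm m.
Proof.
  unfold tm.
  replace (4 * m)%nat with (2 * (2 * m))%nat by lia.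
  replace (2 * (2 * m) + 2)%nat with (2 * (2 * m + 1))%nat by lia.
  replace (2 * (2 * m) + 3)%nat with (2 * (2 * m + 1) + 1)%nat by lia.
  rewrite !u_double_add1, !u_double, u_double_add1, !opp_IZR.
  repeat split. ring.
Qed.

Lemma ln_div_bounds (p q : R) : 0 < p -> 0 < q -> (p - q) / p <= ln (p / q) <= (p - q) / q.
Proof.
  intros Hp Hq.
  assert (Hz : 0 < p / q) by (apply Rdiv_lt_0_compat; assumption).
  pose proof (exp_ineq1_le (ln (p / q))) as Hup.
  pose proof (exp_ineq1_le (- ln (p / q))) as Hlow.
  rewrite exp_ln in Hup by exact Hz.
  rewrite exp_Ropp, exp_ln in Hlow by exact Hz.
  replace (/ (p / q)) with (q / p) in Hlow by (field; lra).
  replace ((p - q) / p) with (1 - q / p) by (field; lra).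
  replace ((p - q) / q) with (p / q - 1) by (field; lra).
  lra.
Qed.

Definition log_ratio (p : R) : R := ln (p / (p + 1)).

Lemma log_ratio_bounds (p : R) : 0 < p -> - / p <= log_ratio p <= - / (p + 1).
Proof.
  intros Hp. unfold log_ratio.
  replace (- / p) with ((p - (p + 1)) / p) by (field; lra).
  replace (- / (p + 1)) with ((p - (p + 1)) / (p + 1)) by (field; lra).
  apply ln_div_bounds; lra.
Qed.

Lemma is_lim_seq_log_ratio (a : nat -> R) :
  (forall n, 0 < a n) -> is_lim_seq a p_infty -> is_lim_seq (fun n => log_ratio (a n)) 0.
Proof.
  intros Hpos Ha.
  apply is_lim_seq_le_le with (u := fun n => - / a n) (w := fun _ => 0).
  - intros n. destruct (log_ratio_bounds (a n) (Hpos n)) as [Hlow Hup].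
    pose proof (Rinv_0_lt_compat (a n + 1) ltac:(specialize (Hpos n); lra)). lra.
  - pose proof (proj1 (is_lim_seq_opp _ _) (is_lim_seq_inv a p_infty Ha ltac:(discriminate))) as H.
    simpl in H. rewrite Ropp_0 in H. exact H.
  - apply is_lim_seq_const.
Qed.

Lemma Rabs_ln_div_le (p q : R) : 0 < p <= q -> Rabs (ln (p / q)) <= (q - p) / p.
Proof.
  intros Hpq. destruct (ln_div_bounds p q) as [Hlow Hup]; try lra.
  assert (Hnpos : (p - q) / q <= 0).
  { unfold Rdiv. pose proof (Rinv_0_lt_compat q ltac:(lra)). nra. }
  rewrite Rabs_left1 by lra.
  replace ((q - p) / p) with (- ((p - q) / p)) by (field; lra). lra.
Qed.

Definition log_ratio_block (y : R) : R :=
  log_ratio y - log_ratio (y + 2) - log_ratio (y + 4) + log_ratio (y + 6).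

Lemma log_ratio_block_eq (y : R) : 0 < y ->
  log_ratio_block y =
  ln ((y * (y + 3) * (y + 5) * (y + 6)) / ((y + 1) * (y + 2) * (y + 4) * (y + 7))).
Proof.
  intros Hy. unfold log_ratio_block, log_ratio.
  rewrite !ln_div, !ln_mult by (repeat apply Rmult_lt_0_compat; lra).
  replace (y + 2 + 1) with (y + 3) by ring.
  replace (y + 4 + 1) with (y + 5) by ring.
  replace (y + 6 + 1) with (y + 7) by ring.
  ring.
Qed.

Lemma Rabs_log_ratio_block_le (y : R) :
  0 < y -> Rabs (log_ratio_block y) <= 2 / y ^ 2 - 2 / (y + 8) ^ 2.
Proof.
  intros Hy. rewrite log_ratio_block_eq by exact Hy.
  set (N := y * (y + 3) * (y + 5) * (y + 6)).
  set (D := (y + 1) * (y + 2) * (y + 4) * (y + 7)).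
  assert (HN : 0 < N) by (unfold N; repeat apply Rmult_lt_0_compat; lra).
  assert (HDN : D - N = 16 * y + 56) by (unfold D, N; ring).
  eapply Rle_trans; [apply Rabs_ln_div_le; lra|].
  rewrite HDN.
  assert (Hgap : 2 / y ^ 2 - 2 / (y + 8) ^ 2 - (16 * y + 56) / N
    = 8 * y * (2 * y ^ 4 + 33 * y ^ 3 + 236 * y ^ 2 + 920 * y + 1440) / (N * y ^ 2 * (y + 8) ^ 2)).
  { unfold N. field. repeat split; lra. }
  assert (0 <= 8 * y * (2 * y ^ 4 + 33 * y ^ 3 + 236 * y ^ 2 + 920 * y + 1440)
               / (N * y ^ 2 * (y + 8) ^ 2)).
  { apply Rlt_le, Rdiv_lt_0_compat.
    - apply Rmult_lt_0_compat; [lra|].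
      pose proof (pow_lt y 2 Hy). pose proof (pow_lt y 3 Hy). pose proof (pow_lt y 4 Hy). lra.
    - apply Rmult_lt_0_compat; [apply Rmult_lt_0_compat|]; auto; apply pow_lt; lra. }
  lra.
Qed.

Lemma ex_series_telescoping_bound (v w : nat -> R) :
  (forall k, 0 <= w k) -> (forall k, Rabs (v k) <= w k - w (S k)) ->
  ex_series v /\ Rabs (Series v) <= w O.
Proof.
  intros Hw Hv.
  set (A := sum_n (fun k => Rabs (v k))).
  assert (HA : forall n, A n <= w O - w (S n)).
  { intros n. unfold A. rewrite sum_n_Reals.
    induction n as [|n IH]; simpl.
    - pose proof (Hv O). lra.
    - pose proof (Hv (S n)). lra. }
  assert (HAw : forall n, A n <= w O) by (intros n; pose proof (HA n); pose proof (Hw (S n)); lra).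
  assert (Habs : ex_series (fun k => Rabs (v k))).
  { destruct (ex_finite_lim_seq_incr A (w O)) as [l Hl]; [|exact HAw|exists l; exact Hl].
    intros n. unfold A. rewrite sum_Sn. pose proof (Rabs_pos (v (S n))). unfold plus. simpl. lra. }
  split; [exact (ex_series_Rabs v Habs)|].
  eapply Rle_trans; [exact (Series_Rabs v Habs)|].
  assert (Hle := is_lim_seq_le A (fun _ => w O) (Series (fun k => Rabs (v k))) (w O)).
  apply Hle; [exact HAw | exact (Series_correct _ Habs) | apply is_lim_seq_const].
Qed.

Lemma Rabs_sub_le_steps (s : nat -> R) (m j : nat) (B : R) :
  (forall i, (m <= i)%nat -> Rabs (s (S i) - s i) <= B) ->
  Rabs (s (m + j)%nat - s m) <= INR j * B.
Proof.
  intros HB. induction j as [|j IH].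
  - rewrite Nat.add_0_r, Rminus_diag, Rabs_R0. simpl. lra.
  - rewrite Nat.add_succ_r, S_INR.
    replace (s (S (m + j)) - s m) with
      ((s (S (m + j)) - s (m + j)%nat) + (s (m + j)%nat - s m)) by ring.
    eapply Rle_trans; [apply Rabs_triang|].
    specialize (HB (m + j)%nat ltac:(lia)). lra.
Qed.

Lemma is_lim_seq_of_arith_subseq (s : nat -> R) (k r : nat) (L : R) :
  (0 < k)%nat ->
  is_lim_seq (fun q => s (k * q + r)%nat) L ->
  is_lim_seq (fun n => s (S n) - s n) 0 ->
  is_lim_seq s L.
Proof.
  intros Hk Hsub Hstep.
  apply is_lim_seq_spec in Hsub, Hstep. apply is_lim_seq_spec.
  intros eps.
  assert (HkR : 0 < INR k) by (apply lt_0_INR; lia).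
  assert (Heps : 0 < eps / (2 * INR k)) by (apply Rdiv_lt_0_compat; [apply cond_pos | lra]).
  destruct (Hsub (pos_div_2 eps)) as [N1 HN1].
  destruct (Hstep (mkposreal _ Heps)) as [N2 HN2]; simpl in HN1, HN2.
  exists (k * (N1 + N2) + r)%nat. intros n Hn.
  set (q := ((n - r) / k)%nat). set (j := ((n - r) mod k)%nat).
  assert (Hn_eq : n = (k * q + r + j)%nat).
  { pose proof (Nat.div_mod_eq (n - r) k). unfold q, j. lia. }
  assert (Hj : (j < k)%nat) by (apply Nat.mod_upper_bound; lia).
  assert (Hq : (N1 + N2 <= q)%nat) by (apply Nat.div_le_lower_bound; lia).
  assert (Htail : Rabs (s (k * q + r + j)%nat - s (k * q + r)%nat) <= INR j * (eps / (2 * INR k))).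
  { apply Rabs_sub_le_steps. intros i Hi.
    apply Rlt_le. rewrite <- (Rminus_0_r (s (S i) - s i)). apply HN2. nia. }
  assert (Hjk : INR j * (eps / (2 * INR k)) < eps / 2).
  { apply lt_INR in Hj. pose proof (cond_pos eps).
    apply (Rmult_lt_reg_r (INR k)); [exact HkR|].
    replace (INR j * (eps / (2 * INR k)) * INR k) with (INR j * (eps / 2)) by (field; lra).
    nra. }
  specialize (HN1 q ltac:(lia)).
  rewrite Hn_eq.
  replace (s (k * q + r + j)%nat - L) with
    ((s (k * q + r + j)%nat - s (k * q + r)%nat) + (s (k * q + r)%nat - L)) by ring.
  eapply Rle_lt_trans; [apply Rabs_triang|]. lra.
Qed.

Fixpoint log_hpartial (x : R) (N : nat) : R :=
  match N with
  | O => 0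
  | S m => log_hpartial x m + tm (S m) * log_ratio (2 * INR (S m) + x)
  end.

Lemma hfactor_eq_exp (x : R) (n : nat) :
  0 < 2 * INR n + x -> hfactor x n = exp (tm n * log_ratio (2 * INR n + x)).
Proof.
  intros Hp. unfold hfactor, tm, log_ratio.
  replace (2 * INR n + 1 + x) with (2 * INR n + x + 1) by ring.
  set (r := (2 * INR n + x) / (2 * INR n + x + 1)).
  assert (Hr : 0 < r) by (apply Rdiv_lt_0_compat; lra).
  destruct (u_sign n) as [-> | ->]; simpl powerRZ.
  - rewrite Rmult_1_l, exp_ln by exact Hr. ring.
  - replace (IZR (-1) * ln r) with (- ln r) by (simpl; ring).
    rewrite exp_Ropp, exp_ln by exact Hr. rewrite Rmult_1_r. reflexivity.
Qed.

Lemma hpartial_eq_exp (x : R) (N : nat) : -2 < x -> hpartial x N = exp (log_hpartial x N).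
Proof.
  intros hx. induction N as [|N IH]; simpl.
  - rewrite exp_0. reflexivity.
  - rewrite exp_plus, IH, hfactor_eq_exp; [reflexivity|].
    rewrite S_INR. pose proof (pos_INR N). lra.
Qed.

Lemma log_hpartial_block (x : R) (m : nat) :
  log_hpartial x (4 * m + 7)
  = log_hpartial x (4 * m + 3) + tm (S m) * log_ratio_block (8 * INR (S m) + x).
Proof.
  assert (Harg : forall r c, 2 * INR r = c -> 2 * INR (4 * S m + r) + x = 8 * INR (S m) + x + c).
  { intros r c <-. rewrite plus_INR, mult_INR. replace (INR 4) with 4 by (simpl; ring). ring. }
  destruct (tm_block (S m)) as [H0 [H1 [H2 H3]]].
  replace (4 * m + 7)%nat with (S (S (S (S (4 * m + 3))))) by lia. cbn [log_hpartial].
  replace (S (4 * m + 3)) with (4 * S m)%nat by lia.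
  replace (S (4 * S m)) with (4 * S m + 1)%nat by lia.
  replace (S (4 * S m + 1)) with (4 * S m + 2)%nat by lia.
  replace (S (4 * S m + 2)) with (4 * S m + 3)%nat by lia.
  rewrite H0, H1, H2, H3.
  rewrite <- (Nat.add_0_r (4 * S m)) at 1.
  rewrite (Harg 0%nat 0), (Harg 1%nat 2), (Harg 2%nat 4), (Harg 3%nat 6), Rplus_0_r
    by (simpl; ring).
  unfold log_ratio_block. ring.
Qed.

Definition hblock_term (x : R) (k : nat) : R := tm (S k) * log_ratio_block (8 * INR (S k) + x).

Lemma log_hpartial_blocks (x : R) (M : nat) :
  log_hpartial x (4 * M + 7) = log_hpartial x 3 + sum_n (hblock_term x) M.
Proof.
  induction M as [|M IH].
  - rewrite sum_O. apply (log_hpartial_block x 0).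
  - rewrite log_hpartial_block, sum_Sn.
    replace (4 * S M + 3)%nat with (4 * M + 7)%nat by lia.
    rewrite IH. unfold hblock_term, plus. simpl. ring.
Qed.

Lemma hblock_series (x : R) : -2 < x ->
  ex_series (hblock_term x) /\ Rabs (Series (hblock_term x)) <= 2 / (x + 8) ^ 2.
Proof.
  intros hx.
  replace (2 / (x + 8) ^ 2) with (2 / (8 * INR 1 + x) ^ 2) by (simpl; f_equal; ring).
  apply (ex_series_telescoping_bound _ (fun k => 2 / (8 * INR (S k) + x) ^ 2)).
  - intros k. apply Rlt_le, Rdiv_lt_0_compat; [lra|]. apply pow_lt.
    rewrite S_INR. pose proof (pos_INR k). lra.
  - intros k. unfold hblock_term. rewrite Rabs_tm_mul.
    replace (8 * INR (S (S k)) + x) with (8 * INR (S k) + x + 8) by (rewrite (S_INR (S k)); ring).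
    apply Rabs_log_ratio_block_le. rewrite S_INR. pose proof (pos_INR k). lra.
Qed.

Definition log_h (x : R) : R := log_hpartial x 3 + Series (hblock_term x).

Lemma is_lim_seq_log_hpartial (x : R) : -2 < x -> is_lim_seq (log_hpartial x) (log_h x).
Proof.
  intros hx. apply (is_lim_seq_of_arith_subseq _ 4 7); [lia| |].
  - apply is_lim_seq_ext with (fun M => log_hpartial x 3 + sum_n (hblock_term x) M).
    { intros M. symmetry. apply log_hpartial_blocks. }
    apply is_lim_seq_plus'; [apply is_lim_seq_const|].
    exact (Series_correct _ (proj1 (hblock_series x hx))).
  - apply is_lim_seq_abs_0.
    apply is_lim_seq_ext with (fun n => Rabs (log_ratio (2 * INR (S n) + x))).
    { intros n. change (log_hpartial x (S n))
        with (log_hpartial x n + tm (S n) * log_ratio (2 * INR (S n) + x)).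
      rewrite <- (Rabs_tm_mul (S n)). f_equal. ring. }
    apply (is_lim_seq_abs_0 (fun n => log_ratio (2 * INR (S n) + x))), is_lim_seq_log_ratio.
    + intros n. rewrite S_INR. pose proof (pos_INR n). lra.
    + apply is_lim_seq_le_p_loc with INR; [|exact is_lim_seq_INR].
      exists O. intros n _. rewrite S_INR. pose proof (pos_INR n). lra.
Qed.

Lemma h_eq_exp (x : R) : -2 < x -> h x = exp (log_h x).
Proof.
  intros hx. unfold h.
  rewrite (is_lim_seq_unique (hpartial x) (exp (log_h x))); [reflexivity|].
  apply is_lim_seq_ext with (fun n => exp (log_hpartial x n)).
  { intros n. symmetry. apply hpartial_eq_exp. exact hx. }
  apply is_lim_seq_continuous.
  - apply derivable_continuous_pt, derivable_pt_exp.
  - apply is_lim_seq_log_hpartial. exact hx.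
Qed.

Lemma log_hpartial_3 (x : R) :
  log_hpartial x 3 = - log_ratio (x + 2) - log_ratio (x + 4) + log_ratio (x + 6).
Proof.
  destruct (tm_block 0) as [_ [H1 [H2 H3]]]. simpl in H1, H2, H3.
  assert (H0 : tm 0 = 1) by reflexivity.
  cbn [log_hpartial]. rewrite H1, H2, H3, H0.
  replace (2 * INR 1 + x) with (x + 2) by (simpl; ring).
  replace (2 * INR 2 + x) with (x + 4) by (simpl; ring).
  replace (2 * INR 3 + x) with (x + 6) by (simpl; ring).
  ring.
Qed.

Lemma log_h_pos (x : R) : -2 < x -> 0 < log_h x.
Proof.
  intros hx. destruct (hblock_series x hx) as [_ HS]. apply Rabs_le_between in HS.
  unfold log_h. rewrite log_hpartial_3.
  destruct (log_ratio_bounds (x + 2)), (log_ratio_bounds (x + 4)), (log_ratio_bounds (x + 6));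
    try lra.
  replace (x + 2 + 1) with (x + 3) in * by ring.
  assert (Hgap : 2 / (x + 8) ^ 2 < / (x + 3) - / (x + 6)).
  { apply Rlt_0_minus.
    replace (/ (x + 3) - / (x + 6) - 2 / (x + 8) ^ 2)
      with ((x ^ 2 + 30 * x + 156) / ((x + 3) * (x + 6) * (x + 8) ^ 2)) by (field; lra).
    apply Rdiv_lt_0_compat; [nra|].
    apply Rmult_lt_0_compat; [apply Rmult_lt_0_compat; lra | apply pow_lt; lra]. }
  pose proof (Rinv_0_lt_compat (x + 4 + 1) ltac:(lra)). lra.
Qed.

Lemma log_h_lt (x : R) : -2 < x -> log_h x < - 2 * log_ratio (x + 2).
Proof.
  intros hx. destruct (hblock_series x hx) as [_ HS]. apply Rabs_le_between in HS.
  unfold log_h. rewrite log_hpartial_3.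
  destruct (log_ratio_bounds (x + 2)), (log_ratio_bounds (x + 4)), (log_ratio_bounds (x + 6));
    try lra.
  replace (x + 2 + 1) with (x + 3) in * by ring.
  replace (x + 6 + 1) with (x + 7) in * by ring.
  assert (H34 : / (x + 4) < / (x + 3)) by (apply Rinv_lt_contravar; nra).
  assert (H78 : 2 / (x + 8) ^ 2 < / (x + 7)).
  { apply Rlt_0_minus.
    replace (/ (x + 7) - 2 / (x + 8) ^ 2)
      with ((x ^ 2 + 14 * x + 50) / ((x + 7) * (x + 8) ^ 2)) by (field; lra).
    apply Rdiv_lt_0_compat; [nra|].
    apply Rmult_lt_0_compat; [lra | apply pow_lt; lra]. }
  lra.
Qed.

Theorem theorem3 (x : R) (hx : -2 < x) :
  1 < h x /\ h x < ((x + 3) / (x + 2)) ^ 2.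
Proof.
  assert (Hsq : ((x + 3) / (x + 2)) ^ 2 = exp (- 2 * log_ratio (x + 2))).
  { unfold log_ratio. replace (- 2 * ln ((x + 2) / (x + 2 + 1)))
      with (- ln ((x + 2) / (x + 2 + 1)) + - ln ((x + 2) / (x + 2 + 1))) by ring.
    rewrite exp_plus, exp_Ropp, exp_ln by (apply Rdiv_lt_0_compat; lra).
    field. lra. }
  rewrite h_eq_exp, Hsq, <- exp_0 by exact hx.
  split; apply exp_increasing; [apply log_h_pos | apply log_h_lt]; exact hx.
Qed.
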